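(* Let $X$ be a spectrally negative Lévy process with scale function $W$ (as in the context). Let $\omega$ be a nonnegative locally bounded measurable function on $\mathbb{R}$, fix $u\in\mathbb{R}$ and put $\omega_u(z):=\omega(u-z)$. Let $W^{(\omega)}$ and $W^{(\omega_u)}$ be the $\omega$-scale function and the $\omega_u$-scale function respectively, i.e. the unique locally bounded solutions of \[ W^{(\omega)}(x,y)=W(x-y)+\int_y^xW(x-z)\omega(z)W^{(\omega)}(z,y)dz,\qquad W^{(\omega_u)}(x,y)=W(x-y)+\int_y^xW(x-z)\omega(u-z)W^{(\omega_u)}(z,y)dz \] for $x,y\in\mathbb{R}$. Then $W^{(\omega_u)}(u-y,u-x)=W^{(\omega)}(x,y)$ for all $x,y\in\mathbb{R}$.
   Context: $X$ is a spectrally negative Lévy process with Laplace exponent $\psi(\lambda)=\log\mathbb{E}e^{\lambda X_1}$; its scale function $W:\mathbb{R}\to[0,\infty)$ satisfies $W(x)=0$ for $x<0$, is increasing on $[0,\infty)$, and $\int_0^\infty e^{-\lambda x}W(x)dx=1/\psi(\lambda)$ for $\lambda$ large enough. It is known that, for nonnegative locally bounded measurable $\varpi$, the unique locally bounded solution $W^{(\varpi)}$ of $W^{(\varpi)}(x,y)=W(x-y)+\int_y^xW(x-z)\varpi(z)W^{(\varpi)}(z,y)dz$ is also the unique locally bounded solution of $W^{(\varpi)}(x,y)=W(x-y)+\int_y^xW^{(\varpi)}(x,z)\varpi(z)W(z-y)dz$. *)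

From HB Require Import structures.
From mathcomp Require Import all_boot all_order all_algebra.
From mathcomp Require Import all_classical all_reals all_analysis.
Set Implicit Arguments. Unset Strict Implicit. Unset Printing Implicit Defensive.
Import Order.TTheory GRing.Theory Num.Theory.
Import numFieldNormedType.Exports.
Local Open Scope classical_set_scope.
Local Open Scope ring_scope.

Definition oint (R : realType) (a b : R) (f : R -> R) : R :=
  if a <= b then Rintegral lebesgue_measure `[a, b]%classic f
  else - Rintegral lebesgue_measure `[b, a]%classic f.

(* Laplace exponent of a spectrally negative Levy process, given through its
   Levy-Khintchine triplet (gamma, sigma, Pi):
     psi(l) = gamma l + sigma^2 l^2 / 2
              + \int_(-oo,0) (e^{l x} - 1 - l x 1_{x > -1}) Pi(dx),  l >= 0,
   where Pi is a Levy measure carried by (-oo,0), and the process is not the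
   negative of a subordinator (i.e. does not have monotone decreasing paths). *)
Definition is_SNLP_laplace_exponent (R : realType) (psi : R -> R) : Prop :=
  exists (gamma sigma : R) (Pi : {measure set R -> \bar R}),
    [/\ Pi `[0, +oo[%classic = 0%E,
        (\int[Pi]_(x in setT) (Num.min 1 (x ^+ 2))%:E < +oo)%E,
        ~ [/\ sigma = 0,
              (\int[Pi]_(x in `](-1)%R, 0%R[%classic) (`|x|)%:E < +oo)%E &
              gamma + Rintegral Pi `]-1, 0[%classic (fun x => `|x|) <= 0] &
        forall l, 0 <= l ->
          psi l = gamma * l + sigma ^+ 2 / 2 * l ^+ 2
                  + Rintegral Pi `]-oo, 0[%classic
                      (fun x => expR (l * x) - 1
                                - (if - 1 < x then l * x else 0))].

Definition is_scale_function (R : realType) (psi : R -> R) (W : R -> R) : Prop :=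
  [/\ forall x, x < 0 -> W x = 0,
      forall x, 0 <= W x,
      {in `[0, +oo[ &, {homo W : x y / x <= y}} &
      exists l0 : R, forall l, l0 < l ->
        0 < psi l /\
        (\int[@lebesgue_measure R]_(x in `[0%R, +oo[%classic) (expR (- (l * x)) * W x)%:E
          = ((psi l)^-1)%:E)%E].

Definition locally_bounded1 (R : realType) (f : R -> R) : Prop :=
  forall M : R, exists C : R, forall x, `|x| <= M -> `|f x| <= C.

Definition locally_bounded2 (R : realType) (F : R -> R -> R) : Prop :=
  forall M : R, exists C : R, forall x y, `|x| <= M -> `|y| <= M -> `|F x y| <= C.

Definition is_omega_scale_function (R : realType) (W w : R -> R)
    (F : R -> R -> R) : Prop :=
  [/\ locally_bounded2 F,
      forall y, measurable_fun setT (fun z => F z y) &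
      forall x y, F x y = W (x - y) + oint y x (fun z => W (x - z) * w z * F z y)].

From HB Require Import structures.
From mathcomp Require Import all_boot all_order all_algebra.
From mathcomp Require Import all_classical all_reals all_analysis.
From mathcomp Require Import measurable_realfun lra ring.
Import Order.TTheory GRing.Theory Num.Theory.
Import numFieldNormedType.Exports.
Local Open Scope classical_set_scope.
Local Open Scope ring_scope.

(* Fix y < x and put F t := W^(w)(t, y) and V s := W^(w_u)(u - s, u - x).
   F solves the forward Volterra equation
     F t = W (t - y) + \int_y^t W (t - s) w s F s ds,
   and the substitution z |-> u - z turns the equation of W^(w_u) into the
   backward one
     V s = W (x - s) + \int_s^x V t w t W (t - s) dt.
   Expanding \int_y^x V t w t F t dt with either equation produces the same
   double integral (Fubini, using that W vanishes on (-oo, 0)), whence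
   V y - W (x - y) = F x - W (x - y).  For x < y both sides vanish, and for
   x = y both equal W 0. *)

Section bounded_integration.
Context {d} {T : measurableType d} {R : realType}.
Variable mu : {measure set T -> \bar R}.

Lemma bounded_globally_le (A : set T) (f : T -> R) (C : R) :
  (forall x, A x -> `|f x| <= C) -> [bounded f x | x in A].
Proof.
move=> fC; rewrite /bounded_near; near=> M => x Ax /=.
by apply: le_trans (fC x Ax) _; near: M; exact: nbhs_pinfty_ge (num_real C).
Unshelve. all: end_near. Qed.

Lemma measurable_le_integrable (C : R) (A : set T) (f : T -> R) :
  measurable A -> (mu A < +oo)%E -> measurable_fun A f ->
  (forall x, A x -> `|f x| <= C) -> mu.-integrable A (EFin \o f).
Proof.
by move=> mA Afin mf /bounded_globally_le; exact: measurable_bounded_integrable.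
Qed.

Lemma integral_restrict_Rintegral (A : set T) (f : T -> R) :
  measurable A -> mu.-integrable A (EFin \o f) ->
  (\int[mu]_x ((f \_ A) x)%:E = (\int[mu]_(x in A) f x)%:E)%E.
Proof.
move=> mA intf; rewrite /Rintegral fineK; last exact: integrable_fin_num.
by rewrite [RHS]integral_mkcond; apply: eq_integral => x _; rewrite restrict_EFin.
Qed.

End bounded_integration.

Section fubini_rectangle.
Context {d1 d2} {T1 : measurableType d1} {T2 : measurableType d2} {R : realType}.
Variables (C : R) (m1 : {sigma_finite_measure set T1 -> \bar R})
  (m2 : {sigma_finite_measure set T2 -> \bar R}).
Variables (A1 : set T1) (A2 : set T2) (f : T1 -> T2 -> R).
Hypotheses (mA1 : measurable A1) (mA2 : measurable A2).
Hypotheses (A1fin : (m1 A1 < +oo)%E) (A2fin : (m2 A2 < +oo)%E).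
Hypothesis mf : measurable_fun setT (fun p : T1 * T2 => f p.1 p.2).
Hypothesis fC : forall x y, A1 x -> A2 y -> `|f x y| <= C.

Lemma Rintegral_fubini_rectangle :
  \int[m1]_(x in A1) \int[m2]_(y in A2) f x y =
  \int[m2]_(y in A2) \int[m1]_(x in A1) f x y.
Proof.
pose g := (fun p : T1 * T2 => f p.1 p.2) \_ (A1 `*` A2).
have mA12 : measurable (A1 `*` A2) by exact: measurableX.
have intg : (m1 \x m2)%E.-integrable setT (EFin \o g).
  rewrite -restrict_EFin; apply/(integrable_mkcond _ mA12).
  apply: (measurable_le_integrable _ C) => //.
  - suff : ((m1 \x m2) (A1 `*` A2) < +oo)%E by [].
    rewrite product_measure1E //; apply: lte_mul_pinfty => //.
    by rewrite ge0_fin_numE.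
  - exact: measurable_funTS.
  - by move=> [x y] [/= ? ?]; exact: fC.
have g1 x : (\int[m2]_y (g (x, y))%:E =
    ((fun x => \int[m2]_(y in A2) f x y) \_ A1 x)%:E)%E.
  rewrite patchE; case: ifPn => xA1.
    rewrite -integral_restrict_Rintegral //; last first.
      apply: (measurable_le_integrable _ C) => //.
        exact: measurable_funTS (measurableT_comp mf (pair1_measurable x)).
      by move=> y; apply: fC; exact/set_mem.
    by apply: eq_integral => y _; rewrite /g !patchE in_setX xA1.
  under eq_integral do rewrite /g patchE in_setX (negbTE xA1) /=.
  exact: integral0.
have g2 y : (\int[m1]_x (g (x, y))%:E =
    ((fun y => \int[m1]_(x in A1) f x y) \_ A2 y)%:E)%E.
  rewrite patchE; case: ifPn => yA2.
    rewrite -integral_restrict_Rintegral //; last first.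
      apply: (measurable_le_integrable _ C) => //.
        exact: measurable_funTS (measurableT_comp mf (pair2_measurable y)).
      by move=> x xA1; apply: fC => //; exact/set_mem.
    by apply: eq_integral => x _; rewrite /g !patchE in_setX yA2 andbT.
  under eq_integral do rewrite /g patchE in_setX (negbTE yA2) andbF /=.
  exact: integral0.
rewrite [LHS]Rintegral_mkcond [RHS]Rintegral_mkcond; congr fine.
under eq_integral do rewrite -g1.
by rewrite (Fubini intg); apply: eq_integral => y _; rewrite g2.
Qed.

End fubini_rectangle.

Section lebesgue_interval.
Context {R : realType}.
Local Notation mu := (@lebesgue_measure R).

Lemma lebesgue_measure_itv_cc_lty (a b : R) : (mu `[a, b] < +oo)%E.
Proof.
by rewrite lebesgue_measure_itv /=; case: ifP => //= _; rewrite -EFinD ltry.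
Qed.

Lemma integrable_itv_cc_le (C a b : R) (f : R -> R) :
  measurable_fun setT f -> (forall x, a <= x <= b -> `|f x| <= C) ->
  mu.-integrable `[a, b] (EFin \o f).
Proof.
move=> mf fC; apply: (measurable_le_integrable _ C) => //.
- exact: lebesgue_measure_itv_cc_lty.
- exact: measurable_funTS.
Qed.

Lemma measurable_subr (u : R) : measurable_fun setT (fun z : R => u - z).
Proof. exact: measurable_funB. Qed.

Lemma measurable_shift {k : R -> R} (c : R) :
  measurable_fun setT k -> measurable_fun setT (fun t : R => k (t - c)).
Proof. by move=> mk; apply: measurableT_comp mk _; exact: measurable_funB. Qed.

Lemma measurable_reflect {k : R -> R} (c : R) :
  measurable_fun setT k -> measurable_fun setT (fun t : R => k (c - t)).
Proof. by move=> mk; exact: measurableT_comp mk (measurable_subr c). Qed.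

Lemma lebesgue_measure_reflect (u : R) (A : set R) : measurable A ->
  pushforward mu ((fun z => u - z) : _ -> measurableTypeR R) A = mu A.
Proof.
move=> mA; apply/esym/lebesgue_measure_unique => //=; first exact: measurable_subr.
move=> _ _ [[a b]] _ <-.
rewrite /pushforward (_ : _ @^-1` _ = `[u - b, u - a[%classic); last first.
  by apply/seteqP; split => z /=; rewrite !in_itv /= => /andP[? ?];
    apply/andP; split; lra.
rewrite !lebesgue_measure_itv /= !lte_fin.
have -> : (u - b < u - a) = (a < b) by apply/idP/idP => ?; lra.
by case: ifP => // _; rewrite -!EFinD; congr EFin; lra.
Qed.

Lemma integral_reflect (u : R) (D : set R) (f : R -> \bar R) :
  measurable D -> measurable_fun setT f ->
  (\int[mu]_(x in D) f x =
   \int[mu]_(z in (fun z => (u - z)%R) @^-1` D) f (u - z)%R)%E.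
Proof.
move=> mD mf; pose r := (fun z => u - z) : R -> measurableTypeR R.
have transfer (h : R -> \bar R) : measurable_fun setT h -> (forall x, 0 <= h x)%E ->
    (\int[mu]_(x in D) h x = \int[mu]_(z in r @^-1` D) h (r z))%E.
  move=> mh h0; transitivity (\int[pushforward mu r]_(x in D) h x)%E.
    apply: eq_measure_integral => [|mr A mA _]; first exact: measurable_subr.
    exact: esym (lebesgue_measure_reflect u A mA).
  apply: ge0_integral_pushforward => //; first exact: measurable_subr.
  exact: measurable_funTS.
rewrite integralE [RHS]integralE (funepos_comp f r) (funeneg_comp f r).
by rewrite !transfer //; [exact: measurable_funeneg | exact: measurable_funepos].
Qed.

Lemma Rintegral_reflect (u a b : R) (f : R -> R) : measurable_fun setT f ->
  \int[mu]_(x in `[a, b]) f x = \int[mu]_(z in `[u - b, u - a]) f (u - z).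
Proof.
move=> mf; congr fine; rewrite (integral_reflect u) //; last exact/measurable_EFinP.
congr integral; apply/seteqP; split => z /=; rewrite !in_itv /= => /andP[? ?];
  apply/andP; split; lra.
Qed.

Lemma Rintegral_itv_widenr (a b c : R) (f : R -> R) :
  b <= c -> (forall s, b < s <= c -> f s = 0) ->
  \int[mu]_(s in `[a, b]) f s = \int[mu]_(s in `[a, c]) f s.
Proof.
move=> bc f0; rewrite Rintegral_mkcond [RHS]Rintegral_mkcond.
apply: eq_Rintegral => s _; rewrite !patchE !mem_setE /= !in_itv /=.
have [/andP[a_s sb]|] := boolP (a <= s <= b); first by rewrite a_s (le_trans sb bc).
rewrite negb_and -!ltNge; case: ifP => // /andP[a_s sc] /orP[|bs].
  by rewrite ltNge a_s.
by rewrite f0 // bs sc.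
Qed.

Lemma Rintegral_itv_widenl (a b c : R) (f : R -> R) :
  a <= b -> (forall s, a <= s < b -> f s = 0) ->
  \int[mu]_(s in `[b, c]) f s = \int[mu]_(s in `[a, c]) f s.
Proof.
move=> ab f0; rewrite Rintegral_mkcond [RHS]Rintegral_mkcond.
apply: eq_Rintegral => s _; rewrite !patchE !mem_setE /= !in_itv /=.
have [/andP[bs sc]|] := boolP (b <= s <= c); first by rewrite (le_trans ab bs) sc.
rewrite negb_and -!ltNge; case: ifP => // /andP[a_s sc] /orP[sb|].
  by rewrite f0 // a_s sb.
by rewrite ltNge sc.
Qed.

Lemma Rintegral_volterra_swap {k f g : R -> R} {y x K A B : R} :
  measurable_fun setT k -> measurable_fun setT f -> measurable_fun setT g ->
  (forall r, r < 0 -> k r = 0) ->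
  (forall r, r <= x - y -> `|k r| <= K) ->
  (forall t, y <= t <= x -> `|f t| <= A) ->
  (forall t, y <= t <= x -> `|g t| <= B) ->
  \int[mu]_(t in `[y, x]) (f t * \int[mu]_(s in `[y, t]) (k (t - s) * g s)) =
  \int[mu]_(s in `[y, x]) ((\int[mu]_(t in `[s, x]) (f t * k (t - s))) * g s).
Proof.
move=> mk mf mg k_neg kK fA gB.
(* As k vanishes on (-oo, 0), both triangular integrals are integrals over the
   square [y, x]^2. *)
transitivity (\int[mu]_(t in `[y, x]) \int[mu]_(s in `[y, x]) (f t * k (t - s) * g s)).
  apply: eq_Rintegral => t; rewrite mem_setE /= in_itv /= => /andP[yt tx].
  rewrite (Rintegral_itv_widenr y t x) //; last first.
    by move=> s /andP[ts _]; rewrite k_neg ?mul0r // subr_lt0.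
  rewrite -RintegralZl //; first by apply: eq_Rintegral => s _; rewrite mulrA.
  apply: (integrable_itv_cc_le (K * B)).
    by apply: measurable_funM => //; exact: measurable_reflect.
  move=> s /[dup] /gB gsB /andP[ys sx].
  by rewrite normrM; apply: ler_pM => //; apply: kK; lra.
rewrite (Rintegral_fubini_rectangle (A * K * B)) //.
- apply: eq_Rintegral => s; rewrite mem_setE /= in_itv /= => /andP[ys sx].
  rewrite (Rintegral_itv_widenl y s x) //; last first.
    by move=> t /andP[_ ts]; rewrite k_neg ?mulr0 // subr_lt0.
  rewrite -RintegralZr //.
  apply: (integrable_itv_cc_le (A * K)).
    by apply: measurable_funM => //; exact: measurable_shift.
  move=> t /[dup] /fA ftA /andP[yt tx].
  by rewrite normrM; apply: ler_pM => //; apply: kK; lra.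
- exact: lebesgue_measure_itv_cc_lty.
- exact: lebesgue_measure_itv_cc_lty.
- apply: measurable_funM; first apply: measurable_funM.
  + exact: measurableT_comp mf measurable_fst.
  + by apply: measurableT_comp mk _; exact: measurable_funB measurable_fst measurable_snd.
  + exact: measurableT_comp mg measurable_snd.
- move=> t s; rewrite /= !in_itv /= => /[dup] /fA ftA /andP[yt tx].
  move=> /[dup] /gB gsB /andP[ys sx].
  rewrite !normrM; apply: ler_pM; rewrite ?mulr_ge0 //.
  by apply: ler_pM => //; apply: kK; lra.
Qed.

End lebesgue_interval.

Section volterra_duality.
Context {R : realType}.
Local Notation mu := (@lebesgue_measure R).
Variables (W w F V : R -> R) (y x CW Cw CF CV : R).
Hypotheses (mW : measurable_fun setT W) (mw : measurable_fun setT w).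
Hypotheses (mF : measurable_fun setT F) (mV : measurable_fun setT V).
Hypothesis W_neg : forall r, r < 0 -> W r = 0.
Hypothesis WB : forall r, r <= x - y -> `|W r| <= CW.
Hypothesis wB : forall t, y <= t <= x -> `|w t| <= Cw.
Hypothesis FB : forall t, y <= t <= x -> `|F t| <= CF.
Hypothesis VB : forall t, y <= t <= x -> `|V t| <= CV.
Hypothesis F_eq : forall t, y <= t <= x ->
  F t = W (t - y) + \int[mu]_(s in `[y, t]) (W (t - s) * w s * F s).
Hypothesis V_eq : forall s, y <= s <= x ->
  V s = W (x - s) + \int[mu]_(t in `[s, x]) (V t * w t * W (t - s)).

Hypothesis yx : y <= x.

Let yyx : y <= y <= x. Proof. by rewrite lexx yx. Qed.
Let xyx : y <= x <= x. Proof. by rewrite lexx yx. Qed.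

Let WB' s t : y <= s <= x -> y <= t <= x -> `|W (t - s)| <= CW.
Proof. by move=> /andP[ys sx] /andP[yt tx]; apply: WB; lra. Qed.

Let VwB t : y <= t <= x -> `|V t * w t| <= CV * Cw.
Proof. by move=> tyx; rewrite normrM; apply: ler_pM => //; [exact: VB | exact: wB]. Qed.

Let wFB t : y <= t <= x -> `|w t * F t| <= Cw * CF.
Proof. by move=> tyx; rewrite normrM; apply: ler_pM => //; [exact: wB | exact: FB]. Qed.

Let mVw : measurable_fun setT (fun t => V t * w t).
Proof. exact: measurable_funM. Qed.

Let mwF : measurable_fun setT (fun t => w t * F t).
Proof. exact: measurable_funM. Qed.

Lemma volterra_expand_forward :
  \int[mu]_(t in `[y, x]) (V t * w t * F t) =
  V y - W (x - y) +
  \int[mu]_(t in `[y, x]) (V t * w t * \int[mu]_(s in `[y, t]) (W (t - s) * (w s * F s))).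
Proof.
transitivity (\int[mu]_(t in `[y, x]) (V t * w t * W (t - y)) +
              \int[mu]_(t in `[y, x]) (V t * w t * (F t - W (t - y)))).
  rewrite -RintegralD //; first by apply: eq_Rintegral => t _; rewrite -mulrDr subrKC.
  - apply: (integrable_itv_cc_le (CV * Cw * CW)).
      by apply: measurable_funM => //; exact: measurable_shift.
    by move=> t tyx; rewrite normrM; apply: ler_pM => //; [exact: VwB | exact: WB'].
  - apply: (integrable_itv_cc_le (CV * Cw * (CF + CW))).
      apply: measurable_funM => //.
      by apply: measurable_funB => //; exact: measurable_shift.
    move=> t tyx; rewrite normrM; apply: ler_pM => //; first exact: VwB.
    by apply: le_trans (ler_normB _ _) _; apply: lerD; [exact: FB | exact: WB'].
congr (_ + _); first by rewrite [V y]V_eq // addrC addKr.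
apply: eq_Rintegral => t; rewrite mem_setE /= in_itv /= => tyx.
rewrite [F t]F_eq // addrC addKr.
by congr (_ * _); apply: eq_Rintegral => s _; rewrite mulrA.
Qed.

Lemma volterra_expand_backward :
  \int[mu]_(t in `[y, x]) (V t * w t * F t) =
  F x - W (x - y) +
  \int[mu]_(s in `[y, x])
    ((\int[mu]_(t in `[s, x]) (V t * w t * W (t - s))) * (w s * F s)).
Proof.
transitivity (\int[mu]_(s in `[y, x]) (W (x - s) * (w s * F s)) +
              \int[mu]_(s in `[y, x]) ((V s - W (x - s)) * (w s * F s))).
  rewrite -RintegralD //.
    by apply: eq_Rintegral => t _; rewrite -mulrDl subrKC mulrA.
  - apply: (integrable_itv_cc_le (CW * (Cw * CF))).
      by apply: measurable_funM => //; exact: measurable_reflect.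
    by move=> s syx; rewrite normrM; apply: ler_pM => //; [exact: WB' | exact: wFB].
  - apply: (integrable_itv_cc_le ((CV + CW) * (Cw * CF))).
      apply: measurable_funM => //.
      by apply: measurable_funB => //; exact: measurable_reflect.
    move=> s syx; rewrite normrM; apply: ler_pM => //; last exact: wFB.
    by apply: le_trans (ler_normB _ _) _; apply: lerD; [exact: VB | exact: WB'].
congr (_ + _).
  by rewrite [F x]F_eq // addrC addKr; apply: eq_Rintegral => s _; rewrite mulrA.
apply: eq_Rintegral => s; rewrite mem_setE /= in_itv /= => syx.
by rewrite [V s]V_eq // addrC addKr.
Qed.

Lemma volterra_duality : V y = F x.
Proof.
have := volterra_expand_backward.
rewrite volterra_expand_forward (Rintegral_volterra_swap mW mVw mwF W_neg WB VwB wFB).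
by move/addIr/addIr.
Qed.

End volterra_duality.

Lemma ler_norm_itv {R : realDomainType} (y x t : R) :
  y <= t <= x -> `|t| <= `|y| + `|x|.
Proof.
move=> /andP[yt tx]; have := ler_norm x; have := ler_norm (- y).
have := normr_ge0 x; have := normr_ge0 y.
rewrite normrN ler_norml => *; apply/andP; split; lra.
Qed.

Section omega_scale_function.
Context {R : realType} {W w : R -> R} {F : R -> R -> R}.
Local Notation mu := (@lebesgue_measure R).
Hypothesis W_neg : forall r, r < 0 -> W r = 0.
Hypothesis hF : is_omega_scale_function W w F.

Lemma omega_scale_function_diag x : F x x = W 0.
Proof.
by case: hF => _ _ ->; rewrite subrr /oint lexx set_itv1 Rintegral_set1 addr0.
Qed.

Lemma omega_scale_function_lt x y : x < y -> F x y = 0.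
Proof.
move=> xy; case: hF => _ _ ->; rewrite W_neg ?subr_lt0 // add0r /oint leNgt xy /=.
rewrite -(Rintegral_itv_widenr x x y) ?set_itv1 ?Rintegral_set1 ?oppr0 ?ltW //.
by move=> z /andP[xz _]; rewrite W_neg ?mul0r // subr_lt0.
Qed.

Lemma omega_scale_function_ge x y : y <= x ->
  F x y = W (x - y) + \int[mu]_(z in `[y, x]) (W (x - z) * w z * F z y).
Proof. by move=> yx; case: hF => _ _ ->; rewrite /oint yx. Qed.

End omega_scale_function.

Section reflection.
Context {R : realType} {W w : R -> R} {u : R} {F G : R -> R -> R}.
Local Notation mu := (@lebesgue_measure R).
Hypotheses (mW : measurable_fun setT W) (mw : measurable_fun setT w).
Hypotheses (W_lb : locally_bounded1 W) (w_lb : locally_bounded1 w).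
Hypothesis W_neg : forall r, r < 0 -> W r = 0.
Hypothesis hF : is_omega_scale_function W w F.
Hypothesis hG : is_omega_scale_function W (fun z => w (u - z)) G.

Lemma omega_scale_function_reflect_backward s x : s <= x ->
  G (u - s) (u - x) =
  W (x - s) + \int[mu]_(t in `[s, x]) (G (u - t) (u - x) * w t * W (t - s)).
Proof.
move=> sx; have [_ mG _] := hG.
rewrite (omega_scale_function_ge hG) ?lerD2l ?lerN2 //.
congr (_ + _); first by congr W; ring.
rewrite (Rintegral_reflect u s x).
  apply: eq_Rintegral => z _.
  have -> : u - (u - z) = z by ring.
  have -> : u - z - s = u - s - z by ring.
  ring.
apply: measurable_funM; first apply: measurable_funM => //.
  exact: measurable_reflect u (mG (u - x)).
exact: measurable_shift s mW.
Qed.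

Lemma omega_scale_function_reflect_ge x y : y <= x -> G (u - y) (u - x) = F x y.
Proof.
move=> yx; have [Fb mF _] := hF; have [Gb mG _] := hG.
pose M := `|u| + `|x| + `|y|.
have [CW CWB] := W_lb (x - y); have [Cw CwB] := w_lb M.
have [CF CFB] := Fb M; have [CG CGB] := Gb M.
have M_bound t : y <= t <= x -> `|t| <= M /\ `|u - t| <= M.
  move=> /ler_norm_itv tyx; have := ler_normB u t; have := normr_ge0 u.
  by rewrite /M; split; lra.
have yM : `|y| <= M by have := normr_ge0 u; have := normr_ge0 x; rewrite /M; lra.
have [_ uxM] : `|x| <= M /\ `|u - x| <= M by apply: M_bound; rewrite yx lexx.
apply: (@volterra_duality _ W w (F^~ y) (fun t => G (u - t) (u - x)) y x
  CW Cw CF CG) => //.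
- exact: measurable_reflect u (mG (u - x)).
- move=> r rxy; have [r0|r0] := ltrP r 0.
    rewrite W_neg // normr0; apply: le_trans (CWB 0 _); rewrite ?normr0 ?subr_ge0 //.
  by apply: CWB; rewrite ger0_norm.
- by move=> t /M_bound[tM _]; exact: CwB.
- by move=> t /M_bound[tM _]; exact: CFB.
- by move=> t /M_bound[_ utM]; exact: CGB.
- by move=> t /andP[yt _]; exact: (omega_scale_function_ge hF).
- by move=> s /andP[_ sx]; exact: omega_scale_function_reflect_backward.
Qed.

End reflection.

Section scale_function.
Context {R : realType} {psi W : R -> R}.
Hypothesis hW : is_scale_function psi W.

Lemma scale_function_nondecreasing : {homo W : s t / s <= t}.
Proof.
have [W_neg W_ge0 W_mono _] := hW; move=> s t st.
have [s0|s0] := ltrP s 0; first by rewrite W_neg ?W_ge0.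
by apply: W_mono; rewrite ?in_itv /= ?andbT // (le_trans s0 st).
Qed.

Lemma scale_function_measurable : measurable_fun setT W.
Proof. exact: nondecreasing_measurable scale_function_nondecreasing. Qed.

Lemma scale_function_locally_bounded : locally_bounded1 W.
Proof.
have [_ W_ge0 _ _] := hW; move=> M; exists (W M) => r rM.
rewrite ger0_norm //; apply: scale_function_nondecreasing.
exact: le_trans (ler_norm r) rM.
Qed.

End scale_function.

Theorem lemma2 (R : realType) (psi W : R -> R)
  (hpsi : is_SNLP_laplace_exponent psi) (hW : is_scale_function psi W)
  (omega : R -> R)
  (homega_ge0 : forall x, 0 <= omega x)
  (homega_lb : locally_bounded1 omega)
  (homega_meas : measurable_fun setT omega)
  (u : R) (Womega Womegau : R -> R -> R)
  (hWomega : is_omega_scale_function W omega Womega)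
  (hWomegau : is_omega_scale_function W (fun z => omega (u - z)) Womegau) :
  forall x y : R, Womegau (u - y) (u - x) = Womega x y.
Proof.
have [W_neg _ _ _] := hW.
move=> x y; have [xy|yx|<-] := ltgtP x y.
- rewrite (omega_scale_function_lt W_neg hWomega) //.
  by apply: (omega_scale_function_lt W_neg hWomegau); rewrite ltrD2l ltrN2.
- apply: (omega_scale_function_reflect_ge (scale_function_measurable hW)
    homega_meas (scale_function_locally_bounded hW) homega_lb W_neg
    hWomega hWomegau).
  exact: ltW.
- by rewrite (omega_scale_function_diag hWomega) (omega_scale_function_diag hWomegau).
Qed.
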